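(* Consider an $m$-partial SCS with schedule $(f,g)$ at time $t$, and let $\sigma$ be a simple path in a ring, starting at the position at time $t$ of one robot and ending at the position at time $t$ of another robot of the same ring. Let $A_1,\dots,A_s$ be the directed circle arcs traversed by $\sigma$ in order, following the travel direction of the ring, let $C_j$ denote the circle containing $A_j$ (the $C_j$ need not be distinct), let $t_i$ be the time required by a robot to traverse $A_i$, and let $\theta_j$ be the angular position in $C_j$ of the second endpoint of $A_j$. Then for all $1\le j\le s$, $$f(C_j)+g(C_j)\cdot 2\pi\cdot\Big(t+\sum_{i=1}^{j}t_i\Big)=\theta_j \pmod{2\pi}.$$
   Context: Let $T$ be a set of pairwise disjoint unit circles in the plane (trajectories) and $\epsilon<0.5$ a communication range; the graph of potential links $G_\epsilon(T)$ has the circle centers as nodes and an edge $\{i,j\}$ whenever the centers are at distance at most $2+\epsilon$; it is assumed connected. Points of a circle are identified with angles (modulo $2\pi$), and a robot traverses a circle (length $2\pi$) in one time unit. A schedule is a pair $(f,g)$, $f:T\to[0,2\pi)$, $g:T\to\{-1,1\}$ ($1$ = counterclockwise); the robot on $C$ is at angle $f(C)+2\pi g(C)t$ at time $t$. A communication graph $G=(V,E)$ is a connected spanning subgraph of $G_\epsilon(T)$. The link position $\phi_{ij}$ is the point of $C_i$ closest to $C_j$. A schedule is $G$-synchronized if for every $\{i,j\}\in E$ the robot on $C_i$ is at $\phi_{ij}$ exactly when the robot on $C_j$ is at $\phi_{ji}$. An SCS with communication graph $G$ consists of one robot per circle moving under a $G$-synchronized schedule with $g(C_i)=-g(C_j)$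 for all $\{i,j\}\in E$. Shifting protocol: when a robot on $C_i$ reaches $\phi_{ij}$ and there is no robot at $\phi_{ji}$, it moves to $C_j$ and thereafter follows the schedule of $C_j$. An $m$-partial SCS is obtained by removing all but $m$ robots, the remaining ones applying the shifting protocol. A ring is the closed path traversed by a robot that follows the assigned direction on each circle and always shifts to the neighboring circle at link positions. A path in a ring follows the travel direction of the ring; it is simple if it contains no full tour of the ring. *)

From Stdlib Require Import Reals Lra Lia Relations.
Open Scope R_scope.

Definition pt := (R * R)%type.
Definition dist (p q : pt) : R :=
  sqrt ((fst p - fst q) ^ 2 + (snd p - snd q) ^ 2).

Definition eqmod2pi (x y : R) : Prop := exists k : Z, x - y = 2 * PI * IZR k.

(* The trajectories: n unit circles C_0,...,C_{n-1}; circle i has center c i. *)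
Definition disjoint_unit_circles (n : nat) (c : nat -> pt) : Prop :=
  forall i j, (i < n)%nat -> (j < n)%nat -> i <> j -> 2 < dist (c i) (c j).

Definition potential_link (n : nat) (c : nat -> pt) (eps : R) (i j : nat) : Prop :=
  (i < n)%nat /\ (j < n)%nat /\ i <> j /\ dist (c i) (c j) <= 2 + eps.

Definition connected_on (n : nat) (E : nat -> nat -> Prop) : Prop :=
  forall i j, (i < n)%nat -> (j < n)%nat -> clos_refl_trans nat E i j.

Definition comm_graph (n : nat) (c : nat -> pt) (eps : R) (E : nat -> nat -> Prop) : Prop :=
  (forall i j, E i j -> potential_link n c eps i j) /\
  (forall i j, E i j -> E j i) /\
  connected_on n E.

(* theta is (an angle representing) the link position phi_ij: the point of C_i
   closest to C_j, i.e. the direction from c i towards c j. *)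
Definition link_angle (c : nat -> pt) (i j : nat) (theta : R) : Prop :=
  cos theta * dist (c i) (c j) = fst (c j) - fst (c i) /\
  sin theta * dist (c i) (c j) = snd (c j) - snd (c i).

(* Schedule (f,g): f C in [0,2pi), g C in {-1,1} (1 = counterclockwise). *)
Definition valid_schedule (n : nat) (f g : nat -> R) : Prop :=
  forall i, (i < n)%nat -> (0 <= f i < 2 * PI) /\ (g i = 1 \/ g i = -1).

Definition sched_angle (f g : nat -> R) (i : nat) (tau : R) : R :=
  f i + 2 * PI * g i * tau.

Definition synchronized (c : nat -> pt) (E : nat -> nat -> Prop) (f g : nat -> R) : Prop :=
  forall i j, E i j -> forall thi thj, link_angle c i j thi -> link_angle c j i thj ->
  forall tau, eqmod2pi (sched_angle f g i tau) thi <-> eqmod2pi (sched_angle f g j tau) thj.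

(* SCS with communication graph E (one robot per circle moving under (f,g)). *)
Definition SCS (c : nat -> pt) (E : nat -> nat -> Prop) (f g : nat -> R) : Prop :=
  synchronized c E f g /\ (forall i j, E i j -> g i = - g j).

Definition at_link (c : nat -> pt) (f g : nat -> R) (i j : nat) (tau : R) : Prop :=
  exists theta, link_angle c i j theta /\ eqmod2pi (sched_angle f g i tau) theta.

Definition circ_left (circ : nat -> R -> nat) (r : nat) (tau : R) (i : nat) : Prop :=
  exists delta, 0 < delta /\ forall tau', tau - delta < tau' < tau -> circ r tau' = i.

(* Some robot was on circle j (hence, if tau is a link time, at phi_ji)
   just before time tau. *)
Definition occupied_before (circ : nat -> R -> nat) (m j : nat) (tau : R) : Prop :=
  exists r', (r' < m)%nat /\ circ_left circ r' tau j.

(* m-partial SCS: robots 0..m-1; circ r tau is the circle on which robot r is at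
   time tau (the robot then is at angle sched_angle f g (circ r tau) tau, i.e. it
   follows the schedule of its current circle).  Robots start (time 0, before
   any shift) on pairwise distinct circles (all other robots of the SCS having
   been removed), and move according to the shifting protocol. *)
Definition partial_SCS (n : nat) (c : nat -> pt) (E : nat -> nat -> Prop)
    (f g : nat -> R) (m : nat) (circ : nat -> R -> nat) : Prop :=
  (* initial circles (encoded as the circle at negative times) *)
  (forall r tau, (r < m)%nat -> tau < 0 -> circ r tau = circ r (-(1))) /\
  (forall r, (r < m)%nat -> (circ r (-(1)) < n)%nat) /\
  (forall r r', (r < m)%nat -> (r' < m)%nat -> r <> r' -> circ r (-(1)) <> circ r' (-(1))) /\
  (forall r tau, (r < m)%nat -> 0 <= tau -> (circ r tau < n)%nat) /\
  (* circles change only at isolated instants (right-continuity, left limits) *)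
  (forall r tau, (r < m)%nat -> 0 <= tau ->
     exists delta, 0 < delta /\ forall tau', tau <= tau' < tau + delta -> circ r tau' = circ r tau) /\
  (forall r tau, (r < m)%nat -> 0 <= tau -> exists i, circ_left circ r tau i) /\
  (forall r tau i, (r < m)%nat -> 0 <= tau -> circ_left circ r tau i -> circ r tau <> i ->
     E i (circ r tau) /\ at_link c f g i (circ r tau) tau /\
     ~ occupied_before circ m (circ r tau) tau) /\
  (forall r tau i j, (r < m)%nat -> 0 <= tau -> circ_left circ r tau i -> E i j ->
     at_link c f g i j tau -> ~ occupied_before circ m j tau -> circ r tau = j).

(* A path in a ring: directed arcs A_1..A_s; A_k lies on circle C k, starts at
   angle a k and has angular length l k >= 0, traversed in direction g (C k);
   its second endpoint is a k + g (C k) * l k. *)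
Definition arc_end (g : nat -> R) (C : nat -> nat) (a l : nat -> R) (k : nat) : R :=
  a k + g (C k) * l k.

Definition ring_path (n : nat) (c : nat -> pt) (E : nat -> nat -> Prop) (g : nat -> R)
    (s : nat) (C : nat -> nat) (a l : nat -> R) : Prop :=
  (1 <= s)%nat /\
  (forall k, (1 <= k <= s)%nat -> (C k < n)%nat /\ 0 <= l k) /\
  (forall k, (1 < k < s)%nat -> 0 < l k) /\
  (forall k, (1 <= k < s)%nat ->
     E (C k) (C (S k)) /\
     (exists th, link_angle c (C k) (C (S k)) th /\ eqmod2pi (arc_end g C a l k) th) /\
     (exists th, link_angle c (C (S k)) (C k) th /\ eqmod2pi (a (S k)) th)) /\
  (* ring rule: the robot shifts at the first link position it meets *)
  (forall k j u th, (1 <= k <= s)%nat -> E (C k) j -> 0 < u < l k ->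
     link_angle c (C k) j th -> ~ eqmod2pi (a k + g (C k) * u) th) /\
  (* simple: no point of the ring is traversed twice (no full tour) *)
  (forall k k' u u', (1 <= k <= s)%nat -> (1 <= k' <= s)%nat -> C k = C k' ->
     0 <= u < l k -> 0 <= u' < l k' -> (k, u) <> (k', u') ->
     ~ eqmod2pi (a k + g (C k) * u) (a k' + g (C k') * u')).

Fixpoint prefix_sum (u : nat -> R) (j : nat) : R :=
  match j with
  | O => 0
  | S j' => prefix_sum u j' + u (S j')
  end.

(* time needed to traverse an arc of angular length len (a full circle takes 1) *)
Definition arc_time (len : R) : R := len / (2 * PI).

From Stdlib Require Import Reals Lra Lia.
Open Scope R_scope.

(* If at time [t + t_1 + ... + t_(j-1)] the schedule
   of [C_j] points at the start of [A_j], then after the further time [t_j] it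
   points at the end of [A_j], which is the link position towards [C_(j+1)];
   synchronization of the schedules of [C_j] and [C_(j+1)] then puts the
   schedule of [C_(j+1)] at the opposite link position, the start of [A_(j+1)]. *)

Lemma eqmod2pi_sym x y : eqmod2pi x y -> eqmod2pi y x.
Proof. intros [k Hk]. exists (- k)%Z. rewrite opp_IZR. lra. Qed.

Lemma eqmod2pi_trans x y z : eqmod2pi x y -> eqmod2pi y z -> eqmod2pi x z.
Proof. intros [k Hk] [k' Hk']. exists (k + k')%Z. rewrite plus_IZR. lra. Qed.

Lemma eqmod2pi_addr x y d : eqmod2pi x y -> eqmod2pi (x + d) (y + d).
Proof. intros [k Hk]. exists k. lra. Qed.

Lemma sched_angle_add_arc_time f g i tau len :
  sched_angle f g i (tau + arc_time len) = sched_angle f g i tau + g i * len.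
Proof.
  unfold sched_angle, arc_time. field.
  pose proof PI_RGT_0. lra.
Qed.

Lemma sched_angle_arc_end f g C a l k tau :
  eqmod2pi (sched_angle f g (C k) tau) (a k) ->
  eqmod2pi (sched_angle f g (C k) (tau + arc_time (l k))) (arc_end g C a l k).
Proof.
  intros Hstart. rewrite sched_angle_add_arc_time. unfold arc_end.
  now apply eqmod2pi_addr.
Qed.

Lemma synchronized_link c E f g i j thi thj tau :
  synchronized c E f g -> E i j -> link_angle c i j thi -> link_angle c j i thj ->
  eqmod2pi (sched_angle f g i tau) thi -> eqmod2pi (sched_angle f g j tau) thj.
Proof. intros Hsync HE Hi Hj. exact (proj1 (Hsync i j HE thi thj Hi Hj tau)). Qed.

Section RingPath.

Variables (n : nat) (c : nat -> pt) (E : nat -> nat -> Prop) (f g : nat -> R).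
Variables (s : nat) (C : nat -> nat) (a l : nat -> R) (t : R).

Hypothesis sync : synchronized c E f g.
Hypothesis path : ring_path n c E g s C a l.
Hypothesis start : eqmod2pi (sched_angle f g (C 1%nat) t) (a 1%nat).

Let T := prefix_sum (fun i => arc_time (l i)).

Lemma ring_path_arc_start k :
  (S k <= s)%nat -> eqmod2pi (sched_angle f g (C (S k)) (t + T k)) (a (S k)).
Proof.
  destruct path as (_ & _ & _ & linked & _).
  induction k as [|k IH]; intros Hk.
  - simpl. now rewrite Rplus_0_r.
  - destruct (linked (S k) ltac:(lia))
      as (HE & (th & Hth & Hend) & (th' & Hth' & Hstart')).
    assert (Hsched_end : eqmod2pi (sched_angle f g (C (S k)) (t + T (S k))) th).
    { replace (t + T (S k)) with (t + T k + arc_time (l (S k)))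
        by (unfold T; simpl; ring).
      eapply eqmod2pi_trans; [| exact Hend].
      apply sched_angle_arc_end, IH. lia. }
    eapply eqmod2pi_trans.
    + exact (synchronized_link _ _ _ _ _ _ _ _ _ sync HE Hth Hth' Hsched_end).
    + now apply eqmod2pi_sym.
Qed.

Lemma ring_path_arc_end k :
  (S k <= s)%nat ->
  eqmod2pi (sched_angle f g (C (S k)) (t + T (S k))) (arc_end g C a l (S k)).
Proof.
  intros Hk. replace (t + T (S k)) with (t + T k + arc_time (l (S k)))
    by (unfold T; simpl; ring).
  now apply sched_angle_arc_end, ring_path_arc_start.
Qed.

End RingPath.

Theorem proposition1 (n : nat) (c : nat -> pt) (eps : R) (E : nat -> nat -> Prop)
  (f g : nat -> R) (m : nat) (circ : nat -> R -> nat) (t : R)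
  (r1 r2 : nat) (s : nat) (C : nat -> nat) (a l : nat -> R) :
  0 < eps -> eps < 1/2 ->
  disjoint_unit_circles n c ->
  connected_on n (potential_link n c eps) ->
  comm_graph n c eps E ->
  valid_schedule n f g ->
  SCS c E f g ->
  partial_SCS n c E f g m circ ->
  0 <= t ->
  (r1 < m)%nat -> (r2 < m)%nat -> r1 <> r2 ->
  ring_path n c E g s C a l ->
  C 1%nat = circ r1 t ->
  eqmod2pi (a 1%nat) (sched_angle f g (circ r1 t) t) ->
  C s = circ r2 t ->
  eqmod2pi (arc_end g C a l s) (sched_angle f g (circ r2 t) t) ->
  forall j, (1 <= j <= s)%nat ->
    eqmod2pi (f (C j) + g (C j) * 2 * PI * (t + prefix_sum (fun i => arc_time (l i)) j))
             (arc_end g C a l j).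
Proof.
  intros _ _ _ _ _ _ [sync _] _ _ _ _ _ path HC1 Hstart _ _ j Hj.
  rewrite <- HC1 in Hstart.
  destruct j as [|k]; [lia |].
  replace (f (C (S k)) + g (C (S k)) * 2 * PI * _)
    with (sched_angle f g (C (S k)) (t + prefix_sum (fun i => arc_time (l i)) (S k)))
    by (unfold sched_angle; ring).
  apply (ring_path_arc_end n c E f g s C a l t sync path); [| lia].
  now apply eqmod2pi_sym.
Qed.
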